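(* Let $G=(V,E)$ be a finite simple oriented complete graph on $N$ vertices. Then $G$ can be transformed into a directed acyclic graph by a sequence of at most $\frac{|E|}{2}=\frac{N^2-N}{4}$ Single Edge Flips such that the number of directed 3-cycles strictly decreases with each application of a Single Edge Flip.
   Context: A simple oriented graph is a pair $G=(V,E)$ with $E\subseteq\{(i,j)\in V\times V: i\neq j\}$ such that $(i,j)\in E$ implies $(j,i)\notin E$. It is complete if for all distinct $i,j\in V$ exactly one of $(i,j),(j,i)$ lies in $E$ (a tournament). For $(i,j)\in E$, the Single Edge Flip $\mathrm{SEF}_{i,j}$ maps $G$ to $(V,(E\setminus\{(i,j)\})\cup\{(j,i)\})$. A directed 3-cycle is a set of three vertices $\{a,b,c\}$ with $(a,b),(b,c),(c,a)\in E$. *)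

From mathcomp Require Import all_boot.
Set Implicit Arguments. Unset Strict Implicit. Unset Printing Implicit Defensive.

(* An oriented graph on a finite vertex type V is given by its edge set
   E : {set V * V}; (i,j) \in E means the edge is directed i -> j. *)

Definition simple_oriented (V : finType) (E : {set V * V}) : Prop :=
  forall i j : V, (i, j) \in E -> (i != j) /\ ((j, i) \notin E).

Definition complete (V : finType) (E : {set V * V}) : Prop :=
  forall i j : V, i != j -> (((i, j) \in E) (+) ((j, i) \in E)).

Definition SEF (V : finType) (E : {set V * V}) (e : V * V) : {set V * V} :=
  (E :\ e) :|: [set (e.2, e.1)].

Definition three_cycles (V : finType) (E : {set V * V}) : {set {set V}} :=
  [set S : {set V} | [exists a : V, exists b : V, exists c : V,
     [&& S == [set a; b; c], (a, b) \in E, (b, c) \in E & (c, a) \in E]]].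

Definition num_three_cycles (V : finType) (E : {set V * V}) : nat :=
  #|three_cycles E|.

Definition acyclic (V : finType) (E : {set V * V}) : Prop :=
  forall (x : V) (p : seq V),
    p != [::] -> path (fun u v => (u, v) \in E) x p -> last x p != x.

Fixpoint decreasing_flip_seq (V : finType) (E : {set V * V}) (s : seq (V * V))
  : Prop :=
  match s with
  | [::] => acyclic E
  | e :: s' =>
      [/\ e \in E, num_three_cycles (SEF E e) < num_three_cycles E
        & decreasing_flip_seq (SEF E e) s']
  end.

From mathcomp Require Import all_boot zify.
Set Implicit Arguments. Unset Strict Implicit. Unset Printing Implicit Defensive.

(* Write d(x) for the out-degree.  Reversing an edge u -> v of a tournament
   exchanges the 3-cycles u -> v -> k -> u for the 3-cycles v -> u -> k -> v,
   and counting the possible apexes k shows that the number of 3-cycles drops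
   by exactly d(v) - d(u) + 1.  So if v has maximal out-degree, the edges into v
   can be reversed one by one, each flip decreasing the number of 3-cycles (d(v)
   only grows, the other degrees only shrink), until v is a source.  As d(v) is
   at least the average (m - 1)/2 on m vertices, at most (m - 1)/2 flips are
   needed.  Then v is set aside and the process continues on the remaining
   vertices, for at most the sum of (m - 1)/2 over m <= N, i.e. N(N - 1)/4 =
   |E|/2 flips; the vertices set aside, in order, form a topological order. *)

Section Flips.
Variable V : finType.
Implicit Types (E : {set V * V}) (R : {set V}) (u v x y : V).

Definition tournament E := simple_oriented E /\ complete E.

Lemma simple_loopF E x : simple_oriented E -> (x, x) \notin E.
Proof. by move=> HS; apply/negP => /HS []; rewrite eqxx. Qed.

Lemma complete_rev E x y : complete E -> x != y -> ((y, x) \in E) = ((x, y) \notin E).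
Proof. by move/(_ x y) => HC /HC; case: ((x, y) \in E); case: ((y, x) \in E). Qed.

Lemma in_SEF E e p : (p \in SEF E e) = (p == (e.2, e.1)) || (p != e) && (p \in E).
Proof. by rewrite !inE orbC. Qed.

Lemma pair_swap_eq (a b c d : V) : ((b, a) == (d, c)) = ((a, b) == (c, d)).
Proof. by rewrite !xpair_eqE andbC. Qed.

Lemma tournament_SEF E u v : tournament E -> (u, v) \in E -> tournament (SEF E (u, v)).
Proof.
move=> [HS HC] uvE; have [uv vuE] := HS _ _ uvE; split.
- move=> x y; rewrite !in_SEF /= => /orP [/eqP [-> ->]|/andP [xy_uv xyE]].
    by rewrite eq_sym uv xpair_eqE (negbTE uv) eqxx.
  have [xy yxE] := HS _ _ xyE; split => //.
  by rewrite (pair_swap_eq x y) (negbTE xy_uv) (negbTE yxE) andbF.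
- move=> x y xy; rewrite !in_SEF /= !(pair_swap_eq x y).
  have [[-> ->]|_] := eqVneq (x, y) (u, v); first by rewrite uvE xpair_eqE (negbTE uv).
  have [[-> ->]|_] := eqVneq (x, y) (v, u); first by rewrite (negbTE vuE).
  exact: HC.
Qed.

Definition outN E x := [set y | (x, y) \in E].
Definition inN E x := [set y | (y, x) \in E].
Definition outdeg E x := #|outN E x|.

Lemma outN_SEF_src E u v : u != v -> outN (SEF E (u, v)) u = outN E u :\ v.
Proof. by move=> uv; apply/setP => k; rewrite !inE !xpair_eqE /= eqxx (negbTE uv) orbF. Qed.

Lemma outN_SEF_tgt E u v : u != v -> outN (SEF E (u, v)) v = u |: outN E v.
Proof.
by move=> uv; apply/setP => k; rewrite !inE !xpair_eqE /= eqxx (eq_sym v u) (negbTE uv) orbC.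
Qed.

Lemma outN_SEF_other E u v x : x != u -> x != v -> outN (SEF E (u, v)) x = outN E x.
Proof.
by move=> xu xv; apply/setP => k; rewrite !inE !xpair_eqE /= (negbTE xu) (negbTE xv) orbF.
Qed.

Lemma inN_SEF_tgt E u v : u != v -> inN (SEF E (u, v)) v = inN E v :\ u.
Proof.
move=> uv; apply/setP => k; rewrite !inE !xpair_eqE /= eqxx andbT (eq_sym v u) (negbTE uv).
by rewrite andbF orbF.
Qed.

Definition through u v : {set {set V}} := [set S : {set V} | u \in S & v \in S].

Lemma through_sym u v : through v u = through u v.
Proof. by apply/setP => S; rewrite !inE andbC. Qed.

Lemma set3_rot (a b c : V) : [set a; b; c] = [set b; c; a].
Proof.
by apply/setP => z; rewrite !inE; case: (z == a); case: (z == b); case: (z == c).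
Qed.

Lemma three_cycles_eq_on E E' (S : {set V}) :
  {in S &, forall x y, ((x, y) \in E) = ((x, y) \in E')} ->
  (S \in three_cycles E) = (S \in three_cycles E').
Proof.
suff sub E1 E2 : {in S &, forall x y, ((x, y) \in E1) = ((x, y) \in E2)} ->
    S \in three_cycles E1 -> S \in three_cycles E2.
  by move=> eqS; apply/idP/idP; apply: sub => // x y xS yS; rewrite eqS.
move=> eqS; rewrite !inE => /existsP [a /existsP [b /existsP [c]]].
case/and4P => /eqP defS ab bc ca.
have [aS bS cS] : [/\ a \in S, b \in S & c \in S] by rewrite defS !inE !eqxx !orbT.
apply/existsP; exists a; apply/existsP; exists b; apply/existsP; exists c.
by rewrite defS eqxx -(eqS a b) // -(eqS b c) // -(eqS c a) // ab bc ca.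
Qed.

Lemma three_cycle_edge E (a b c u v : V) : simple_oriented E ->
  (a, b) \in E -> (b, c) \in E -> (c, a) \in E ->
  u \in [set a; b; c] -> v \in [set a; b; c] -> (u, v) \in E ->
  exists2 k, [set a; b; c] = [set u; v; k] & ((v, k) \in E) && ((k, u) \in E).
Proof.
move=> HS ab bc ca; rewrite !inE.
case/orP => [/orP [] | ] /eqP -> ; case/orP => [/orP [] | ] /eqP -> e;
  try by have [/eqP] := HS _ _ e.
all: try by move: (HS _ _ e).2; rewrite ?ab ?bc ?ca.
- by exists c; rewrite ?bc ?ca.
- by exists a; [rewrite set3_rot | rewrite ca ab].
- by exists b; [rewrite -set3_rot | rewrite ab bc].
Qed.

Lemma three_cycles_through E u v : simple_oriented E -> (u, v) \in E ->
  three_cycles E :&: through u v =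
  [set [set u; v; k] | k in outN E v :&: inN E u].
Proof.
move=> HS uvE; apply/setP => S; rewrite in_setI [S \in through u v]inE.
apply/idP/imsetP => [|[k]].
- case/andP; rewrite inE => /existsP [a /existsP [b /existsP [c]]].
  case/and4P => /eqP -> ab bc ca /andP [uS vS].
  have [k defS /andP [vk ku]] := three_cycle_edge HS ab bc ca uS vS uvE.
  by exists k; rewrite ?inE ?vk ?ku.
- rewrite !inE => /andP [vk ku] ->; rewrite !inE !eqxx orbT andbT /=.
  apply/existsP; exists u; apply/existsP; exists v; apply/existsP; exists k.
  by rewrite eqxx uvE vk ku.
Qed.

Lemma card_three_cycles_through E u v : simple_oriented E -> (u, v) \in E ->
  #|three_cycles E :&: through u v| = #|outN E v :&: inN E u|.
Proof.
move=> HS uvE; rewrite three_cycles_through //.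
apply: card_in_imset => k k'; rewrite !inE => /andP [vk ku] _ eqS.
have : k \in [set u; v; k] by rewrite !inE eqxx orbT.
rewrite eqS !inE => /orP [/orP [/eqP ek|/eqP ek]|/eqP //].
- by move: ku; rewrite ek (negbTE (simple_loopF _ HS)).
- by move: vk; rewrite ek (negbTE (simple_loopF _ HS)).
Qed.

Lemma three_cycles_SEF_off E u v :
  three_cycles (SEF E (u, v)) :\: through u v =
  three_cycles E :\: through u v.
Proof.
apply/setP => S; rewrite !in_setD [S \in through u v]inE.
case uvS: ((u \in S) && (v \in S)) => //=.
apply: three_cycles_eq_on => x y xS yS; rewrite in_SEF /=.
have [[ex ey]|_] := eqVneq (x, y) (v, u); first by rewrite -ex -ey yS xS in uvS.
by have [[ex ey]|_] := eqVneq (x, y) (u, v); first by rewrite -ex -ey xS yS in uvS.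
Qed.

Lemma apex_outdeg_balance E u v : tournament E -> (u, v) \in E ->
  #|outN E v :&: inN E u| + outdeg E u = #|outN E u :&: inN E v| + outdeg E v + 1.
Proof.
move=> [HS HC] uvE; have [uv vuE] := HS _ _ uvE.
have Dv : outN E v :\: inN E u = outN E v :&: outN E u.
  apply/setP => k; rewrite !inE; have [<-|uk] := eqVneq u k.
    by rewrite (negbTE vuE) andbF.
  by rewrite (complete_rev HC uk) negbK andbC.
have Du : outN E u :\: inN E v = v |: (outN E v :&: outN E u).
  apply/setP => k; rewrite !inE; have [<-|vk] := eqVneq v k.
    by rewrite (negbTE (simple_loopF _ HS)) uvE.
  by rewrite (complete_rev HC vk) negbK andbC.
have := cardsID (inN E u) (outN E v); have := cardsID (inN E v) (outN E u).
rewrite Dv Du cardsU1 !inE (negbTE (simple_loopF _ HS)) /outdeg /=; lia.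
Qed.

Lemma num_three_cycles_SEF E u v : tournament E -> (u, v) \in E ->
  num_three_cycles (SEF E (u, v)) + outdeg E v + 1 = num_three_cycles E + outdeg E u.
Proof.
move=> T uvE; have [HS _] := T; have [uv _] := HS _ _ uvE.
have [HS' _] := tournament_SEF T uvE.
have vuE' : (v, u) \in SEF E (u, v) by rewrite in_SEF eqxx.
have apexes' : outN (SEF E (u, v)) u :&: inN (SEF E (u, v)) v = outN E u :&: inN E v.
  rewrite outN_SEF_src // inN_SEF_tgt //; apply/setP => k; rewrite !inE.
  have [->|_] := eqVneq k v; first by rewrite (negbTE (simple_loopF _ HS)) !andbF.
  by have [->|_] := eqVneq k u; rewrite ?(negbTE (simple_loopF _ HS)).
rewrite /num_three_cycles -(cardsID (through u v) (three_cycles E)).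
rewrite -(cardsID (through u v) (three_cycles (SEF E (u, v)))) three_cycles_SEF_off.
rewrite -through_sym (card_three_cycles_through HS' vuE') apexes' through_sym.
rewrite (card_three_cycles_through HS uvE).
have := apex_outdeg_balance T uvE; lia.
Qed.

Lemma num_three_cycles_SEF_lt E u v : tournament E -> (u, v) \in E ->
  outdeg E u <= outdeg E v -> num_three_cycles (SEF E (u, v)) < num_three_cycles E.
Proof. by move=> T uvE; have := num_three_cycles_SEF T uvE; lia. Qed.

(* The vertices outside R have been set aside: the potential f puts them below
   R and increases along every edge touching them, so no edge leaves R, and for
   R = set0 the potential is a topological order. *)
Definition ranked_outside E R := exists (f : V -> nat) (c : nat),
  [/\ {in R, forall x, f x = c}, {in ~: R, forall x, f x < c} &
      forall x y, (x, y) \in E -> (x \notin R) || (y \notin R) -> f x < f y].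

Lemma ranked_outsideT E : ranked_outside E [set: V].
Proof. by exists (fun=> 0), 0; split => [//|x|x y _]; rewrite !inE. Qed.

Lemma ranked_outside_SEF E R u v : ranked_outside E R -> u \in R -> v \in R ->
  ranked_outside (SEF E (u, v)) R.
Proof.
move=> [f [c [fR fC fE]]] uR vR; exists f, c; split => // x y.
by rewrite in_SEF => /orP [/eqP [-> ->]|/andP [_ /fE]] //; rewrite uR vR.
Qed.

Lemma ranked_outside_exit E R x y : ranked_outside E R -> x \in R -> y \notin R ->
  (x, y) \notin E.
Proof.
move=> [f [c [fR fC fE]]] xR yR; apply/negP => /fE; rewrite yR orbT fR // => /(_ isT).
have yC : y \in ~: R by rewrite inE.
by move/ltn_trans/(_ (fC y yC)); rewrite ltnn.
Qed.

Lemma outdeg_ranked E R x : ranked_outside E R -> x \in R -> outdeg E x = #|R :&: outN E x|.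
Proof.
move=> rk xR; apply: eq_card => y; rewrite !inE.
by case yR: (y \in R); rewrite ?(negbTE (ranked_outside_exit rk xR (negbT yR))).
Qed.

Lemma ranked_outside_setD1 E R v : simple_oriented E -> ranked_outside E R -> v \in R ->
  {in R, forall u, (u, v) \notin E} -> ranked_outside E (R :\ v).
Proof.
move=> HS rk vR vsrc; have [f [c [fR fC fE]]] := rk.
exists (fun x => if x == v then c else if x \in R then c.+1 else f x), c.+1; split.
- by move=> x; rewrite !inE => /andP [/negbTE -> ->].
- move=> x; rewrite !inE negb_and negbK; case: eqP => //= _ xR.
  by rewrite (negbTE xR) ltnS ltnW // fC // inE.
move=> x y; rewrite !inE !negb_and !negbK.
have [->|xv] := eqVneq x v; have [->|yv] := eqVneq y v => /= xy.
- by have [/eqP] := HS _ _ xy.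
- case yR: (y \in R) => //.
  by move: xy; rewrite (negbTE (ranked_outside_exit rk vR (negbT yR))).
- case xR: (x \in R); first by move: xy; rewrite (negbTE (vsrc x xR)).
  by move=> _; apply: fC; rewrite inE xR.
case xR: (x \in R); case yR: (y \in R) => //= _.
- by move: xy; rewrite (negbTE (ranked_outside_exit rk xR (negbT yR))).
- by rewrite ltnS ltnW // fC // inE xR.
- by apply: fE; rewrite ?xR.
Qed.

Lemma acyclic_of_potential E (f : V -> nat) :
  (forall x y, (x, y) \in E -> f x < f y) -> acyclic E.
Proof.
move=> fE.
have path_up p x : path (fun a b => (a, b) \in E) x p -> f x <= f (last x p).
  elim: p x => [|y p IH] x //= /andP [/fE xy /IH]; exact/leq_trans/ltnW.
move=> x [|y p] // _ /= /andP [/fE xy /path_up yp].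
by apply/eqP => eqx; move: (leq_trans xy yp); rewrite eqx ltnn.
Qed.

Lemma ranked_outside0_acyclic E : ranked_outside E set0 -> acyclic E.
Proof.
move=> [f [c [_ _ fE]]]; apply: (acyclic_of_potential (f := f)) => x y /fE.
by rewrite inE; apply.
Qed.

Lemma card_setI_pred R (P : pred V) : #|R :&: [set y | P y]| = \sum_(y in R) P y.
Proof.
rewrite -sum1_card (eq_bigl (fun y => (y \in R) && P y)) => [|y]; last by rewrite !inE.
by rewrite big_mkcondr /=; apply: eq_bigr => y _; case: (P y).
Qed.

Lemma sum_outN_inN E R : \sum_(x in R) #|R :&: outN E x| = \sum_(x in R) #|R :&: inN E x|.
Proof.
under eq_bigr do rewrite card_setI_pred.
by under [RHS]eq_bigr do rewrite card_setI_pred; apply: exchange_big.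
Qed.

Lemma card_outN_inN E R x : tournament E -> x \in R ->
  #|R :&: outN E x| + #|R :&: inN E x| = #|R| - 1.
Proof.
move=> [HS HC] xR; rewrite (cardsD1 x R) xR add1n subSS subn0 -cardsUI.
have -> : R :&: outN E x :&: (R :&: inN E x) = set0.
  apply/setP => k; rewrite !inE; case xk: ((x, k) \in E); rewrite ?andbF //=.
  by rewrite (negbTE (HS _ _ xk).2) !andbF.
rewrite cards0 addn0; apply: eq_card => k; rewrite !inE.
case: (k \in R); rewrite ?andbF ?andbT //=.
have [->|kx] := eqVneq k x; first by rewrite (negbTE (simple_loopF _ HS)).
by rewrite (complete_rev HC kx) orNb.
Qed.

Lemma sum_outN_within E R : tournament E ->
  2 * \sum_(x in R) #|R :&: outN E x| = #|R| * (#|R| - 1).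
Proof.
move=> T; rewrite mul2n -addnn {2}sum_outN_inN -big_split /=.
by rewrite (eq_bigr (fun=> #|R| - 1)) ?sum_nat_const // => x; apply: card_outN_inN.
Qed.

Lemma inN_of_max_outN E R v : tournament E -> v \in R ->
  {in R, forall x, #|R :&: outN E x| <= #|R :&: outN E v|} ->
  2 * #|R :&: inN E v| <= #|R| - 1.
Proof.
move=> T vR vmax.
have sum_le : \sum_(x in R) #|R :&: outN E x| <= #|R| * #|R :&: outN E v|.
  by rewrite -sum_nat_const; apply: leq_sum.
have := sum_outN_within R T; have := card_outN_inN T vR.
have : 0 < #|R| by apply/card_gt0P; exists v.
move: sum_le; nia.
Qed.

Lemma card_tournament E : tournament E -> 2 * #|E| = #|V| * (#|V| - 1).
Proof.
move=> T; rewrite -cardsT -(sum_outN_within _ T); congr (2 * _).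
under eq_bigr do rewrite card_setI_pred.
rewrite pair_big /= -sum1_card big_mkcond /=.
under [RHS]eq_bigl do rewrite !inE.
by apply: eq_bigr => -[x y] _; case: ((x, y) \in E).
Qed.

Lemma flips_to_source E R v : tournament E -> ranked_outside E R -> v \in R ->
  {in R, forall x, outdeg E x <= outdeg E v} ->
  exists s E', [/\ size s = #|R :&: inN E v|, tournament E', ranked_outside E' (R :\ v)
    & forall t, decreasing_flip_seq E' t -> decreasing_flip_seq E (s ++ t)].
Proof.
move=> + + vR; move card_in : #|R :&: inN E v| => n.
elim: n E card_in => [|n IH] E card_in T rk vmax.
  exists [::], E; split => //; apply: ranked_outside_setD1 (T.1) rk vR _ => u uR.
  apply/negP => uv; have : u \in R :&: inN E v by rewrite !inE uR uv.
  by rewrite (cards0_eq card_in) inE.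
have [u] : exists u, u \in R :&: inN E v by apply/card_gt0P; rewrite card_in.
rewrite !inE => /andP [uR uvE]; have [uv vuE] := T.1 _ _ uvE.
set E1 := SEF E (u, v).
have outdeg_v : outdeg E1 v = (outdeg E v).+1.
  by rewrite /outdeg outN_SEF_tgt // cardsU1 inE (negbTE vuE).
have vmax1 : {in R, forall x, outdeg E1 x <= outdeg E1 v}.
  move=> x xR; rewrite outdeg_v; have [->|xv] := eqVneq x v; first by rewrite outdeg_v.
  have [->|xu] := eqVneq x u.
    move: (vmax u uR); rewrite /outdeg outN_SEF_src // (cardsD1 v (outN E u)) inE uvE; lia.
  by rewrite /outdeg outN_SEF_other //; apply/leqW/vmax.
have card_in1 : #|R :&: inN E1 v| = n.
  move: card_in; rewrite inN_SEF_tgt // setIDA (cardsD1 u (R :&: inN E v)).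
  by rewrite !inE uR uvE => -[].
have [s [E' [sz T' rk' cont]]] :=
  IH E1 card_in1 (tournament_SEF T uvE) (ranked_outside_SEF rk uR vR) vmax1.
exists ((u, v) :: s), E'; split => //=; first by rewrite sz.
by move=> t /cont; split => //; apply: num_three_cycles_SEF_lt (vmax u uR).
Qed.

Lemma decreasing_flips_ranked E R : tournament E -> ranked_outside E R ->
  exists s, 4 * size s <= #|R| * (#|R| - 1) /\ decreasing_flip_seq E s.
Proof.
move cardR : #|R| => n; elim: n R E cardR => [|n IH] R E cardR T rk.
  by exists [::]; split => //; apply: ranked_outside0_acyclic; rewrite -(cards0_eq cardR).
have [x0 x0R] : exists x, x \in R by apply/card_gt0P; rewrite cardR.
case: (arg_maxnP (outdeg E) x0R) => v; rewrite -/(v \in R) => vR vmax.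
have vmaxR : {in R, forall x, #|R :&: outN E x| <= #|R :&: outN E v|}.
  by move=> x xR; rewrite -!(outdeg_ranked rk) //; apply: vmax.
have in_v := inN_of_max_outN T vR vmaxR.
have [s1 [E1 [sz1 T1 rk1 cont]]] := flips_to_source T rk vR vmax.
have cardRv : #|R :\ v| = n by move: cardR; rewrite (cardsD1 v) vR => -[].
have [s2 [sz2 dec2]] := IH _ _ cardRv T1 rk1.
exists (s1 ++ s2); split; last exact: cont.
by rewrite size_cat sz1; move: in_v sz2; rewrite cardR subSS subn0; nia.
Qed.

End Flips.

Theorem theoremA3 (V : finType) (E : {set V * V}) :
  simple_oriented E -> complete E ->
  exists s : seq (V * V), 2 * size s <= #|E| /\ decreasing_flip_seq E s.
Proof.
move=> HS HC; have T : tournament E by [].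
have [s [sz dec]] := decreasing_flips_ranked T (ranked_outsideT E).
by exists s; split => //; have := card_tournament T; rewrite cardsT in sz; lia.
Qed.
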